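(* Let $\{T(t)\}_{t\in S}\subset L(Y)$ be a dual semigroup representation on $Y\subset X^*$. If $y\in Y$ is both a flight vector and reversible, then $y=0$.
   Context: $X$ is a Banach space, $Y\subset X^*$ a subspace, $S$ an abelian semitopological semigroup (additively written, with unit, Hausdorff, separately continuous addition). A dual semigroup representation is a family $\{T(t)\}_{t\in S}\subset L(Y)$ with (1) $T(s+t)=T(s)T(t)$; (2) $s\mapsto\langle x,T(s)y\rangle$ continuous for all $x\in X,y\in Y$; (3) the $\sigma(X^*,X)$-closure of $O(y)=\{T(t)y:t\in S\}$ lies in $Y$ for each $y\in Y$; (4) each $T(s)$ maps the $\sigma(X^*,X)$-closed absolutely convex hull of $O(y)$ into itself and is $\sigma(X^*,X)$-continuous there. Limits $w^*\text{-}\lim$ in $Y$ are with respect to $\sigma(X^*,X)$. $y\in Y$ is reversible if for every net $(s_\alpha)$ in $S$ for which $w^*\text{-}\lim_\alpha T(s_\alpha)y$ exists there is a net $(t_\gamma)$ in $S$ with $w^*\text{-}\lim_\gamma w^*\text{-}\lim_\alpha T(t_\gamma)T(s_\alpha)y=y$. $y$ is a flight vector if there is a net $(s_\alpha)$ in $S$ with $w^*\text{-}\lim_\alpha T(s_\alpha)y=0$. *)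

From HB Require Import structures.
From mathcomp Require Import all_boot all_order all_algebra.
From mathcomp Require Import all_classical all_reals topology normedtype.
Set Implicit Arguments. Unset Strict Implicit. Unset Printing Implicit Defensive.
Import Order.TTheory GRing.Theory Num.Theory.
Import numFieldNormedType.Exports.
Local Open Scope classical_set_scope.
Local Open Scope ring_scope.

Record dirset := DirSet {
  dcar :> Type;
  dle : dcar -> dcar -> Prop;
  dle_refl : forall a, dle a a;
  dle_trans : forall a b c, dle a b -> dle b c -> dle a c;
  d_inh : dcar;
  d_dir : forall a b, exists c, dle a c /\ dle b c }.

Definition abelian_semitop_monoid (S : topologicalType) (op : S -> S -> S) (e : S) :=
  [/\ hausdorff_space S, associative op, commutative op,
      left_id e op /\ right_id e op &
      (forall s, continuous (op s)) /\ (forall s, continuous (fun t => op t s))].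

Section Dual.
Context {K : numFieldType} {X : normedModType K}.

(* X^* : continuous linear functionals X -> K (elements of X^* are
   represented as functions X -> K; <x, f> := f x). *)
Definition is_dual (f : X -> K) : Prop :=
  (forall (a : K) (u v : X), f (a *: u + v) = a * f u + f v) /\ continuous f.

Definition is_subspace (Y : set (X -> K)) : Prop :=
  [/\ Y `<=` is_dual, Y (fun _ => 0) &
      forall (a : K) y1 y2, Y y1 -> Y y2 -> Y (fun x => a * y1 x + y2 x)].

Definition wlim (D : dirset) (f : D -> X -> K) (z : X -> K) : Prop :=
  forall (x : X) (eps : K), 0 < eps ->
    exists d0 : D, forall d : D, dle d0 d -> `|f d x - z x| < eps.

Definition wclosure (A : set (X -> K)) : set (X -> K) :=
  [set z | is_dual z /\
     exists (D : dirset) (f : D -> X -> K), (forall d, A (f d)) /\ wlim f z].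

Definition abs_conv_hull (A : set (X -> K)) : set (X -> K) :=
  [set z | exists (n : nat) (lam : 'I_n -> K) (a : 'I_n -> X -> K),
     [/\ forall i, A (a i), \sum_(i < n) `|lam i| <= 1 &
         forall x, z x = \sum_(i < n) lam i * a i x]].

Definition wcont_on (C : set (X -> K)) (F : (X -> K) -> (X -> K)) : Prop :=
  forall (D : dirset) (f : D -> X -> K) (z : X -> K),
    (forall d, C (f d)) -> C z -> wlim f z -> wlim (fun d => F (f d)) (F z).

Section Rep.
Context {S : topologicalType} (op : S -> S -> S).

Definition orbit (T : S -> (X -> K) -> (X -> K)) (y : X -> K) : set (X -> K) :=
  [set z | exists t : S, z = T t y].

Definition dual_sg_rep (Y : set (X -> K)) (T : S -> (X -> K) -> (X -> K)) : Prop :=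
  (forall s y, Y y -> Y (T s y)) /\
  (forall s (a : K) y1 y2, Y y1 -> Y y2 ->
     T s (fun x => a * y1 x + y2 x) = (fun x => a * T s y1 x + T s y2 x)) /\
  (forall s, exists M : K, forall y, Y y -> (forall x, `|y x| <= `|x|) ->
     forall x, `|T s y x| <= M * `|x|) /\
  (forall s t y, Y y -> T (op s t) y = T s (T t y)) /\
  (forall (x : X) y, Y y -> continuous (fun s => T s y x)) /\
  (forall y, Y y -> wclosure (orbit T y) `<=` Y) /\
  (forall s y, Y y ->
     (forall z, wclosure (abs_conv_hull (orbit T y)) z ->
                wclosure (abs_conv_hull (orbit T y)) (T s z)) /\
     wcont_on (wclosure (abs_conv_hull (orbit T y))) (T s)).

Definition reversible (Y : set (X -> K)) (T : S -> (X -> K) -> (X -> K)) (y : X -> K) :=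
  forall (D : dirset) (s : D -> S) (z : X -> K),
    Y z -> wlim (fun a => T (s a) y) z ->
    exists (G : dirset) (t : G -> S) (zz : G -> X -> K),
      (forall g, Y (zz g) /\ wlim (fun a => T (t g) (T (s a) y)) (zz g)) /\
      wlim zz y.

Definition flight_vector (T : S -> (X -> K) -> (X -> K)) (y : X -> K) :=
  exists (D : dirset) (s : D -> S), wlim (fun a => T (s a) y) (fun _ => 0).

End Rep.
End Dual.

From Pilot Require Import Defs.
From HB Require Import structures.
From mathcomp Require Import all_boot all_order all_algebra.
From mathcomp Require Import all_classical all_reals topology normedtype.
Import Order.TTheory GRing.Theory Num.Theory.
Import numFieldNormedType.Exports.
Local Open Scope classical_set_scope.
Local Open Scope ring_scope.

(* Let s be a net with T(s_a) y -> 0.  For each t, the net T(t) T(s_a) y lies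
   in the weak* closed absolutely convex hull of the orbit of y, where T(t) is
   weak* continuous, so it converges to T(t) 0 = 0.  Reversibility therefore
   exhibits y as a weak* limit of the zero net, i.e. y = 0. *)

Definition unit_dirset : dirset :=
  @DirSet unit (fun _ _ => True) (fun _ => I) (fun _ _ _ _ _ => I) tt
    (fun _ _ => ex_intro _ tt (conj I I)).

Section WeakLimits.
Context {K : numFieldType} {X : normedModType K}.

Lemma wlim_unique {D : dirset} {f : D -> X -> K} {z1 z2 : X -> K} :
  wlim f z1 -> wlim f z2 -> z1 = z2.
Proof.
move=> lim1 lim2; apply: funext => x; apply/eqP; rewrite -subr_eq0 -normr_le0.
apply/ler_addgt0Pr => eps eps_gt0; rewrite add0r.
have eps2_gt0 : 0 < eps / 2 by rewrite divr_gt0.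
have [d1 near1] := lim1 x _ eps2_gt0; have [d2 near2] := lim2 x _ eps2_gt0.
have [d [le1d le2d]] := d_dir d1 d2.
rewrite -(subrKA (f d x) (z1 x)) (le_trans (ler_normD _ _)) // [eps]splitr ltW //.
by apply: ltrD; [rewrite distrC; apply: near1 | apply: near2].
Qed.

Lemma wlim_cst (D : dirset) (c : X -> K) : wlim (fun _ : D => c) c.
Proof. by move=> x eps eps_gt0; exists (d_inh D) => d _; rewrite subrr normr0. Qed.

Lemma wlim_cst_eq {D : dirset} {c z : X -> K} : wlim (fun _ : D => c) z -> z = c.
Proof. by move=> limz; apply: wlim_unique limz (wlim_cst D c). Qed.

Lemma sub_wclosure (A : set (X -> K)) (z : X -> K) :
  is_dual z -> A z -> wclosure A z.
Proof.
move=> zdual Az; split=> //.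
by exists unit_dirset, (fun _ => z); split; last exact: wlim_cst.
Qed.

Lemma abs_conv_hull0 (A : set (X -> K)) : abs_conv_hull A (fun _ => 0).
Proof.
exists 0%N, (fun _ => 0), (fun _ _ => 0).
by split=> [[]//|//|x]; rewrite ?big_ord0.
Qed.

Lemma abs_conv_hull_subset (A : set (X -> K)) : A `<=` abs_conv_hull A.
Proof.
move=> z Az; exists 1%N, (fun _ => 1), (fun _ => z).
by split=> [//||x]; rewrite big_ord1 ?normr1 ?mul1r.
Qed.

End WeakLimits.

Section DualRepresentation.
Context {K : numFieldType} {X : normedModType K}.
Context {S : topologicalType} {op : S -> S -> S}.
Context {Y : set (X -> K)} {T : S -> (X -> K) -> (X -> K)}.
Hypothesis Ysub : is_subspace Y.
Hypothesis Trep : dual_sg_rep op Y T.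

Lemma rep_map0 (t : S) : T t (fun _ => 0) = (fun _ => 0).
Proof.
have [_ Y0 _] := Ysub; have [_ [Tlin _]] := Trep.
have := Tlin t (-1) _ _ Y0 Y0.
under [fun x => -1 * 0 + 0]funext => x do rewrite mulr0 addr0.
by move=> ->; apply: funext => x; rewrite mulN1r addNr.
Qed.

Lemma orbit_sub_hull_closure (y : X -> K) :
  Y y -> Defs.orbit T y `<=` wclosure (abs_conv_hull (Defs.orbit T y)).
Proof.
have [Ydual _ _] := Ysub; have [TY _] := Trep.
move=> Yy z [t ->]; apply: sub_wclosure; first exact/Ydual/TY.
by apply: abs_conv_hull_subset; exists t.
Qed.

Lemma hull_closure0 (y : X -> K) :
  wclosure (abs_conv_hull (Defs.orbit T y)) (fun _ => 0).
Proof.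
have [Ydual Y0 _] := Ysub.
exact: sub_wclosure (Ydual _ Y0) (abs_conv_hull0 _).
Qed.

Lemma translate_flight_net0 {y : X -> K} {D : dirset} {s : D -> S} {t : S}
    {z : X -> K} :
  Y y -> wlim (fun a => T (s a) y) (fun _ => 0) ->
  wlim (fun a => T t (T (s a) y)) z -> z = (fun _ => 0).
Proof.
move=> Yy lim0 limz; have [_ [_ [_ [_ [_ [_ Tcont]]]]]] := Trep.
have in_hull a : wclosure (abs_conv_hull (Defs.orbit T y)) (T (s a) y).
  by apply: orbit_sub_hull_closure Yy _ _; exists (s a).
have := (Tcont t y Yy).2 D _ _ in_hull (hull_closure0 y) lim0.
by rewrite rep_map0; apply: wlim_unique.
Qed.

End DualRepresentation.

Theorem proposition3p7 (K : numFieldType) (X : completeNormedModType K)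
  (S : topologicalType) (op : S -> S -> S) (e : S)
  (Y : set (X -> K)) (T : S -> (X -> K) -> (X -> K)) :
  abelian_semitop_monoid op e -> is_subspace Y -> dual_sg_rep op Y T ->
  forall y : X -> K, Y y -> flight_vector T y -> reversible Y T y ->
  y = (fun _ => 0).
Proof.
move=> _ Ysub Trep y Yy [D [s lim0]] rev.
have [_ Y0 _] := Ysub.
have [G [t [zz [limzz limy]]]] := rev D s _ Y0 lim0.
have zz0 : zz = fun _ _ => 0.
  apply: funext => g /=; have [_ limg] := limzz g.
  exact: (translate_flight_net0 Ysub Trep Yy lim0 limg).
by rewrite zz0 in limy; exact: (wlim_cst_eq limy).
Qed.
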